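(* Let $n\ge2$, let $\mathbb{K}$ contain a primitive $n$-th root of unity $\zeta_n$, and let $\mathbb{L}/\mathbb{K}$ be a Galois extension of degree $N=n^m$ with Galois group generated by commuting $\theta_1,\dots,\theta_m$ such that $\mathbf{i}\mapsto\boldsymbol\theta^\mathbf{i}$ is a bijection $\Delta(n)^m\to G$. Suppose $\alpha_1,\dots,\alpha_m\in\mathbb{L}^\times$ satisfy $\theta_i(\alpha_j)=\alpha_j$ for $i\ne j$ and $\theta_i(\alpha_i)=\zeta_n\alpha_i$. Order $\Delta(n)^m=\{\mathbf{i}^{(1)},\dots,\mathbf{i}^{(N)}\}$ in reverse lexicographic order ($\mathbf{i}\prec\mathbf{i}'$ iff $i_k<i'_k$ for the largest index $k$ with $i_k\neq i'_k$), and put $\mathcal{B}_m=(\boldsymbol\alpha^{\mathbf{i}^{(1)}},\dots,\boldsymbol\alpha^{\mathbf{i}^{(N)}})$ and $X=(\boldsymbol\zeta^{\mathbf{i}^{(1)}},\dots,\boldsymbol\zeta^{\mathbf{i}^{(N)}})$, the points of $U_n^m$ where $U_n$ is the set of $n$-th roots of unity. Let $0\le r\le m(n-1)$. Then $\mathcal{B}_m$ is a $\mathbb{K}$-basis of $\mathbb{L}$, and for every $\mathbf{j}\in\Delta(n)^m$, \[\mathrm{ev}_{\mathcal{B}_m}(\boldsymbol\theta^\mathbf{j})=\big(\mathbf{x}^\mathbf{j}(\boldsymbol\zeta^{\mathbf{i}^{(1)}}),\dots,\mathbf{x}^\mathbf{j}(\boldsymbol\zeta^{\mathbf{i}^{(N)}})\big)\cdot\mathrm{Diag}(\mathcal{B}_m).\]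 Consequently, if $Y_{r,m}\in\mathbb{K}^{k\times N}$ is the matrix whose rows are the evaluation vectors $(\mathbf{x}^\mathbf{j}(\boldsymbol\zeta^{\mathbf{i}^{(1)}}),\dots,\mathbf{x}^\mathbf{j}(\boldsymbol\zeta^{\mathbf{i}^{(N)}}))$ for $\mathbf{j}\in\Delta(n)^m$ with $|\mathbf{j}|\le r$, then $Y_{r,m}$ is a generator matrix of the Hamming-metric code $\mathrm{HRM}_X(r,m)$, and $Y_{r,m}\,\mathrm{Diag}(\mathcal{B}_m)$ is a generator matrix of $\mathrm{RM}_{\boldsymbol\theta}(r,\mathbf{n})(\mathcal{B}_m)$, $\mathbf{n}=(n,\dots,n)$.
   Context: $\Delta(n)=\{0,\dots,n-1\}$; $\boldsymbol\theta^\mathbf{i}=\theta_1^{i_1}\circ\cdots\circ\theta_m^{i_m}$; $|\mathbf{j}|=\sum_kj_k$; $\boldsymbol\alpha^\mathbf{i}=\prod_k\alpha_k^{i_k}$; $\boldsymbol\zeta^\mathbf{i}=(\zeta_n^{i_1},\dots,\zeta_n^{i_m})\in\mathbb{K}^m$; $\mathbf{x}^\mathbf{j}=x_1^{j_1}\cdots x_m^{j_m}$. $\mathrm{Diag}(\mathcal{B}_m)$ is the $N\times N$ diagonal matrix with diagonal $\mathcal{B}_m$. For $\mathbf{b}\in\mathbb{L}^N$ and $P=\sum b_g g\in\mathbb{L}[G]$, $\mathrm{ev}_\mathbf{b}(P)=(P(b_1),\dots,P(b_N))$ with $P(x)=\sum b_gg(x)$, and $\mathcal{C}(\mathbf{b})=\{\mathrm{ev}_\mathbf{b}(c):c\in\mathcal{C}\}$.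 $\mathrm{RM}_{\boldsymbol\theta}(r,\mathbf{n})=\mathrm{span}_\mathbb{L}\{\boldsymbol\theta^\mathbf{j}:\mathbf{j}\in\Delta(n)^m,|\mathbf{j}|\le r\}$. $\mathrm{HRM}_X(r,m)=\{(p(u_1),\dots,p(u_N)):p\in\mathbb{K}[x_1,\dots,x_m],\deg p\le r\}\subseteq\mathbb{K}^N$ where $u_1,\dots,u_N$ are the points of $X$ in the given order; a generator matrix is a matrix whose rows form a basis of the code. *)

From HB Require Import structures.
From mathcomp Require Import all_boot all_order all_algebra all_fingroup all_field.
From mathcomp.multinomials Require Import mpoly.
Set Implicit Arguments. Unset Strict Implicit. Unset Printing Implicit Defensive.
Import GRing.Theory.
Local Open Scope ring_scope.

(* Delta(n)^m is {ffun 'I_m -> 'I_n}. *)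

Definition revlex_lt (n m : nat) (i i' : {ffun 'I_m -> 'I_n}) : Prop :=
  exists k : 'I_m, (i k < i' k)%N /\ forall l : 'I_m, (k < l)%N -> i l = i' l.

Definition jdeg (n m : nat) (j : {ffun 'I_m -> 'I_n}) : nat := (\sum_(k < m) (j k : nat))%N.

Definition thetaPow (K : fieldType) (L : splittingFieldType K) (n m : nat)
  (theta : 'I_m -> gal_of {:L}) (j : {ffun 'I_m -> 'I_n}) : gal_of {:L} :=
  (\prod_(k < m) theta k ^+ j k)%g.

Definition alphaPow (L : fieldType) (n m : nat) (alpha : 'I_m -> L)
  (i : {ffun 'I_m -> 'I_n}) : L := \prod_(k < m) alpha k ^+ i k.

Definition zetaPt (K : fieldType) (n m : nat) (zeta : K) (i : {ffun 'I_m -> 'I_n})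
  : 'I_m -> K := fun k => zeta ^+ i k.

Definition monoEval (K : fieldType) (n m : nat) (j : {ffun 'I_m -> 'I_n})
  (u : 'I_m -> K) : K := \prod_(k < m) u k ^+ j k.

(* group algebra L[G], G = Gal(L/K): elements sum_g b_g g represented by g |-> b_g *)
Definition galg (K : fieldType) (L : splittingFieldType K) := gal_of {:L} -> L.

Definition gdelta (K : fieldType) (L : splittingFieldType K) (g : gal_of {:L}) : galg L :=
  fun h => (h == g)%:R.

Definition evb (K : fieldType) (L : splittingFieldType K) (N : nat) (b : 'I_N -> L)
  (P : galg L) : 'rV[L]_N :=
  \row_(t < N) \sum_(g : gal_of {:L}) P g * g (b t).

Definition RM_code (K : fieldType) (L : splittingFieldType K) (n m : nat)
  (theta : 'I_m -> gal_of {:L}) (r : nat) (P : galg L) : Prop :=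
  exists c : {ffun 'I_m -> 'I_n} -> L,
    forall g, P g = \sum_(j | (jdeg j <= r)%N) c j * gdelta (thetaPow theta j) g.

Definition code_eval (K : fieldType) (L : splittingFieldType K) (N : nat)
  (C : galg L -> Prop) (b : 'I_N -> L) (v : 'rV[L]_N) : Prop :=
  exists P, C P /\ v = evb b P.

(* HRM_X(r,m) for the ordered points u_1..u_N of K^m (deg 0 = -oo) *)
Definition HRM (K : fieldType) (m N : nat) (u : 'I_N -> ('I_m -> K)) (r : nat)
  (v : 'rV[K]_N) : Prop :=
  exists p : {mpoly K[m]}, (msize p <= r.+1)%N /\ v = \row_(t < N) p.@[u t].

Definition is_generator_matrix (F : fieldType) (k N : nat) (M : 'M[F]_(k, N))
  (C : 'rV[F]_N -> Prop) : Prop :=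
  row_free M /\ forall v : 'rV[F]_N, C v <-> (v <= M)%MS.

Definition lowdeg (n m r : nat) : {set {ffun 'I_m -> 'I_n}} := [set j | (jdeg j <= r)%N].

Definition Ymat (K : fieldType) (n m : nat) (zeta : K) (e : 'I_(n ^ m) -> {ffun 'I_m -> 'I_n})
  (r : nat) : 'M[K]_(#|lowdeg n m r|, n ^ m) :=
  \matrix_(i < #|lowdeg n m r|, t < n ^ m)
     monoEval (enum_val i) (zetaPt zeta (e t)).

(* Everything rests on the characters of (Z/nZ)^m with values in K,
     chi a x = prod_k (zeta^(a_k))^(x_k)     (the monomial x^a at zeta^x),
   and their orthogonality  sum_x chi a x / chi b x = [a = b] n^m. *)
From HB Require Import structures.
From mathcomp Require Import all_boot all_order all_algebra all_fingroup all_field.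
From mathcomp.multinomials Require Import mpoly.
Import GRing.Theory.
Set Implicit Arguments. Unset Strict Implicit. Unset Printing Implicit Defensive.
Local Open Scope ring_scope.

Lemma sum_expr_root1 (K : fieldType) (n : nat) (w : K) : w ^+ n = 1 ->
  \sum_(i < n) w ^+ i = if w == 1 then n%:R else 0.
Proof.
move=> wn; case: eqP => [->|/eqP w_neq1].
  by rewrite (eq_bigr (fun _ => 1)) ?sumr_const ?card_ord // => i _; rewrite expr1n.
have: (w - 1) * \sum_(i < n) w ^+ i = 0 by rewrite -subrX1 wn subrr.
by move/eqP; rewrite mulf_eq0 subr_eq0 (negbTE w_neq1) => /eqP.
Qed.

Section Characters.

Variables (K : fieldType) (n m : nat) (zeta : K).
Hypothesis zeta_prim : n.-primitive_root zeta.

Local Notation idx := {ffun 'I_m -> 'I_n}.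

Definition chi (a x : idx) : K := \prod_k (zeta ^+ a k) ^+ x k.

Lemma chiC (a x : idx) : chi a x = chi x a.
Proof. by apply: eq_bigr => k _; rewrite exprAC. Qed.

Lemma monoEval_zetaPt (j x : idx) : monoEval j (zetaPt zeta x) = chi j x.
Proof. exact: chiC. Qed.

Lemma zeta_neq0 : zeta != 0.
Proof. by rewrite (prim_root_eq0 zeta_prim) -lt0n (prim_order_gt0 zeta_prim). Qed.

Lemma chi_neq0 (a x : idx) : chi a x != 0.
Proof. by apply/prodf_neq0 => k _; rewrite !expf_neq0 // zeta_neq0. Qed.

Lemma eq_prim_expr (a b : 'I_n) : (zeta ^+ a == zeta ^+ b) = (a == b).
Proof. by rewrite (eq_prim_root_expr zeta_prim) !modn_small. Qed.

(* Orthogonality of the characters: each factor of chi a x / chi b x is a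
   power of the n-th root of unity zeta^(a_k) / zeta^(b_k), which is 1
   exactly when a_k = b_k. *)
Lemma chi_orth (a b : idx) :
  \sum_x chi a x / chi b x = (a == b)%:R * (n ^ m)%:R.
Proof.
pose w k := zeta ^+ a k / zeta ^+ b k.
have w_root k : w k ^+ n = 1.
  by rewrite expr_div_n -!(exprAC _ n) (prim_expr_order zeta_prim) !expr1n divr1.
have w_eq1 k : (w k == 1) = (a k == b k).
  rewrite /w -eq_prim_expr; apply/eqP/eqP => [/divr1_eq // | ->].
  by rewrite divff // expf_neq0 // zeta_neq0.
have factor_sum k : \sum_(i < n) w k ^+ i = if a k == b k then n%:R else 0.
  by rewrite sum_expr_root1 // w_eq1.
transitivity (\sum_(x : idx) \prod_k w k ^+ x k).
  by apply: eq_bigr => x _; rewrite -prodf_div; apply: eq_bigr => k _; rewrite expr_div_n.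
rewrite -(bigA_distr_bigA (fun k (i : 'I_n) => w k ^+ i)) (eq_bigr _ (fun k _ => factor_sum k)).
have [<-|a_neq_b] := eqVneq a b.
  by rewrite mul1r (eq_bigr (fun _ => n%:R)) ?prodr_const ?card_ord ?natrX // => k _; rewrite eqxx.
have /existsP [k ak_neq_bk] : [exists k, a k != b k].
  apply: contraNT a_neq_b; rewrite negb_exists => /forallP eq_ab.
  by apply/eqP/ffunP => k; apply/eqP; rewrite -[_ == _]negbK eq_ab.
by rewrite mul0r (bigD1 k) //= (negbTE ak_neq_bk) mul0r.
Qed.

Lemma natr_order_pow_neq0 : (n ^ m)%:R != 0 :> K.
Proof. by rewrite natrX expf_neq0 // (prim_root_natf_neq0 zeta_prim). Qed.

(* A family of vectors annihilated by every character sum is zero: apply the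
   inverse character transform and use orthogonality. *)
Lemma chi_sum_eq0 (V : lmodType K) (v : idx -> V) :
  (forall j, \sum_x chi j x *: v x = 0) -> forall x, v x = 0.
Proof.
move=> v_orth s.
have inverse_transform :
    \sum_j (chi j s)^-1 *: \sum_x chi j x *: v x = (n ^ m)%:R *: v s.
  transitivity (\sum_x (\sum_j chi x j / chi s j) *: v x).
    rewrite (eq_bigr (fun j => \sum_x (chi x j / chi s j) *: v x)) => [|j _].
      by rewrite exchange_big /=; apply: eq_bigr => x _; rewrite scaler_suml.
    by rewrite scaler_sumr; apply: eq_bigr => x _; rewrite scalerA mulrC !(chiC j).
  rewrite (eq_bigr (fun x => ((x == s)%:R * (n ^ m)%:R) *: v x)) => [|x _]; last by rewrite chi_orth.
  rewrite (bigD1 s) //= eqxx mul1r big1 ?addr0 // => x /negbTE ->.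
  by rewrite mul0r scale0r.
move: inverse_transform; rewrite big1 => [/esym/eqP|j _]; last by rewrite v_orth scaler0.
by rewrite scaler_eq0 (negbTE natr_order_pow_neq0) => /eqP.
Qed.

End Characters.

Section EnumeratedRows.

Variables (F : fieldType) (T : finType) (S : {set T}) (N : nat).
Variables (f : T -> 'rV[F]_N) (M : 'M[F]_(#|S|, N)).
Hypothesis rowM : forall i, row i M = f (enum_val i).

Lemma enum_row_sub (j : T) : j \in S -> (f j <= M)%MS.
Proof. by move=> jS; rewrite -(enum_rankK_in jS jS) -rowM row_sub. Qed.

Lemma sub_enum_rowsP (v : 'rV[F]_N) :
  (v <= M)%MS <-> exists c : T -> F, v = \sum_(j in S) c j *: f j.
Proof.
split=> [/submxP [u ->] | [c ->]]; last first.
  by apply: summx_sub => j jS; apply/scalemx_sub/enum_row_sub.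
exists (fun j => \sum_(i | enum_val i == j) u 0 i).
rewrite mulmx_sum_row [RHS]big_enum_val; apply: eq_bigr => i _.
by rewrite rowM (big_pred1 i) // => i'; apply: (inj_eq enum_val_inj).
Qed.

End EnumeratedRows.

Lemma sum_bij (R : nmodType) (I J : finType) (e : I -> J) (F : J -> R) :
  bijective e -> \sum_i F (e i) = \sum_j F j.
Proof. by move=> e_bij; rewrite (reindex e) //; apply: onW_bij. Qed.

Section GroupAlgebraEvaluation.

Variables (K : fieldType) (L : splittingFieldType K) (N : nat) (b : 'I_N -> L).

Lemma evb_ext (P Q : galg L) : (forall g, P g = Q g) -> evb b P = evb b Q.
Proof. by move=> PQ; apply/rowP => t; rewrite !mxE; apply: eq_bigr => g _; rewrite PQ. Qed.

Lemma evb_gdelta (g : gal_of {:L}) : evb b (gdelta g) = \row_t g (b t).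
Proof.
apply/rowP => t; rewrite !mxE (bigD1 g) //= /gdelta eqxx mul1r big1 ?addr0 //.
by move=> h /negbTE ->; rewrite mul0r.
Qed.

Lemma evb_lincomb (I : finType) (P : pred I) (c : I -> L) (h : I -> gal_of {:L}) :
  evb b (fun g => \sum_(j | P j) c j * gdelta (h j) g)
  = \sum_(j | P j) c j *: evb b (gdelta (h j)).
Proof.
apply/rowP => t; rewrite !mxE summxE.
under eq_bigr do rewrite mulr_suml.
rewrite exchange_big; apply: eq_bigr => j _; rewrite !mxE mulr_sumr.
by apply: eq_bigr => g _; rewrite mulrA.
Qed.

End GroupAlgebraEvaluation.

Lemma RM_code_evalP (K : fieldType) (L : splittingFieldType K) (n m N : nat)
    (theta : 'I_m -> gal_of {:L}) (r : nat) (b : 'I_N -> L) (v : 'rV[L]_N) :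
  code_eval (RM_code n theta r) b v <->
  exists c : {ffun 'I_m -> 'I_n} -> L,
    v = \sum_(j in lowdeg n m r) c j *: evb b (gdelta (thetaPow theta j)).
Proof.
split=> [[P [[c Pc] ->]] | [c ->]].
  exists c; rewrite (evb_ext b Pc) evb_lincomb.
  by apply: eq_bigl => j; rewrite inE.
exists (fun g => \sum_(j | (jdeg j <= r)%N) c j * gdelta (thetaPow theta j) g).
split; first by exists c.
by rewrite evb_lincomb; apply: eq_bigl => j; rewrite inE.
Qed.

Section GaloisEigenvectors.

Variables (K : fieldType) (L : splittingFieldType K) (a : L).

Definition gal_eigen (g : gal_of {:L}) (c : K) : Prop := g a = c%:A * a.

Lemma gal_eigen1 : gal_eigen 1%g 1.
Proof. by rewrite /gal_eigen gal_id scale1r mul1r. Qed.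

Lemma gal_eigenM (g h : gal_of {:L}) (c d : K) :
  gal_eigen g c -> gal_eigen h d -> gal_eigen (g * h)%g (c * d).
Proof.
rewrite /gal_eigen => ga ha; rewrite galM ?memvf // ga !mulr_algl linearZ /= ha.
by rewrite mulr_algl scalerA mulrC.
Qed.

Lemma gal_eigenX (g : gal_of {:L}) (c : K) (p : nat) :
  gal_eigen g c -> gal_eigen (g ^+ p)%g (c ^+ p).
Proof.
move=> ga; elim: p => [|p IHp]; first by rewrite expg0 expr0; apply: gal_eigen1.
by rewrite expgS exprS; apply: gal_eigenM.
Qed.

End GaloisEigenvectors.

Section HammingCode.

Variables (K : fieldType) (n m : nat) (zeta : K).
Variables (e : 'I_(n ^ m) -> {ffun 'I_m -> 'I_n}) (r : nat).
Hypothesis zeta_prim : n.-primitive_root zeta.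

Local Notation idx := {ffun 'I_m -> 'I_n}.

Definition mono_evals (j : idx) : 'rV[K]_(n ^ m) := \row_t monoEval j (zetaPt zeta (e t)).

Lemma Ymat_row (i : 'I_#|lowdeg n m r|) : row i (Ymat zeta e r) = mono_evals (enum_val i).
Proof. by apply/rowP => t; rewrite !mxE. Qed.

(* On the grid of n-th roots of unity a monomial x^mo coincides with x^j,
   where j is mo with exponents reduced mod n; in particular |j| <= deg mo. *)
Lemma monomial_reduce (mo : 'X_{1..m}) :
  exists2 j : idx, (jdeg j <= mdeg mo)%N &
    forall x : idx, \prod_k zetaPt zeta x k ^+ mo k = monoEval j (zetaPt zeta x).
Proof.
have n_gt0 := prim_order_gt0 zeta_prim.
exists [ffun k => Ordinal (ltn_pmod (mo k) n_gt0)].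
  by rewrite /jdeg mdegE; apply: leq_sum => k _; rewrite ffunE leq_mod.
move=> x; apply: eq_bigr => k _; rewrite ffunE /= expr_mod //.
by rewrite /zetaPt exprAC (prim_expr_order zeta_prim) expr1n.
Qed.

Lemma HRM_sub_Ymat (v : 'rV[K]_(n ^ m)) :
  HRM (fun t => zetaPt zeta (e t)) r v <-> (v <= Ymat zeta e r)%MS.
Proof.
split=> [[p [p_size ->]] | /(sub_enum_rowsP (f := mono_evals) Ymat_row) [c ->]].
  have -> : \row_t p.@[zetaPt zeta (e t)]
      = \sum_(mo <- msupp p) p@_mo *: \row_t \prod_k zetaPt zeta (e t) k ^+ mo k.
    by apply/rowP => t; rewrite mxE mevalE summxE; apply: eq_bigr => mo _; rewrite !mxE.
  rewrite big_seq; apply: summx_sub => mo mo_supp; apply: scalemx_sub.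
  have [j j_deg j_eval] := monomial_reduce mo.
  have -> : \row_t \prod_k zetaPt zeta (e t) k ^+ mo k = mono_evals j.
    by apply/rowP => t; rewrite !mxE j_eval.
  apply: (enum_row_sub Ymat_row); rewrite inE (leq_trans j_deg) // -ltnS.
  exact: leq_trans (msize_mdeg_lt mo_supp) p_size.
exists (\sum_(j in lowdeg n m r) c j *: 'X_[[multinom (j k : nat) | k < m]]); split.
  apply: leq_trans (msize_sum _ _ _) _; apply/bigmax_leqP => j; rewrite inE => j_low.
  apply: leq_trans (msizeZ_le _ _) _; rewrite msizeX ltnS mdegE.
  by rewrite (eq_bigr _ (fun k _ => mnmE _ k)).
apply/rowP => t; rewrite !mxE raddf_sum summxE /=; apply: eq_bigr => j _.
by rewrite mevalZ mevalX !mxE; congr (_ * _); apply: eq_bigr => k _; rewrite mnmE.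
Qed.

Hypothesis e_bij : bijective e.

(* Y_{r,m} has the right inverse (chi (e t) j)^-1 / n^m, by orthogonality. *)
Lemma Ymat_row_free : row_free (Ymat zeta e r).
Proof.
apply/row_freeP.
exists (\matrix_(t, i) ((n ^ m)%:R^-1 / chi zeta (enum_val i) (e t))).
apply/matrixP => i i'; rewrite !mxE.
transitivity ((n ^ m)%:R^-1 *
    \sum_t chi zeta (enum_val i) (e t) / chi zeta (enum_val i') (e t)).
  by rewrite mulr_sumr; apply: eq_bigr => t _; rewrite !mxE monoEval_zetaPt mulrCA.
rewrite (sum_bij (fun x => chi zeta (enum_val i) x / chi zeta (enum_val i') x) e_bij).
rewrite chi_orth // (inj_eq enum_val_inj) mulrCA mulVf ?mulr1 //.
exact: natr_order_pow_neq0 zeta_prim.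
Qed.

Lemma Ymat_generator :
  is_generator_matrix (Ymat zeta e r) (HRM (fun t => zetaPt zeta (e t)) r).
Proof. by split; [exact: Ymat_row_free | exact: HRM_sub_Ymat]. Qed.

End HammingCode.

Section KummerBasis.

Variables (K : fieldType) (L : splittingFieldType K) (n m : nat) (zeta : K).
Variables (theta : 'I_m -> gal_of {:L}) (alpha : 'I_m -> L).
Hypothesis zeta_prim : n.-primitive_root zeta.
Hypothesis alpha_neq0 : forall k, alpha k != 0.
Hypothesis theta_fix : forall i j, i != j -> theta i (alpha j) = alpha j.
Hypothesis theta_scale : forall i, theta i (alpha i) = zeta%:A * alpha i.

Local Notation idx := {ffun 'I_m -> 'I_n}.

Lemma thetaPow_alpha (j : idx) (l : 'I_m) :
  gal_eigen (alpha l) (thetaPow theta j) (zeta ^+ j l).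
Proof.
have theta_eigen k : gal_eigen (alpha l) (theta k) (if k == l then zeta else 1).
  rewrite /gal_eigen; case: eqP => [->|/eqP k_neq_l]; first exact: theta_scale.
  by rewrite theta_fix // scale1r mul1r.
have -> : zeta ^+ j l = \prod_k (if k == l then zeta else 1) ^+ j k.
  by rewrite (bigD1 l) //= eqxx big1 ?mulr1 // => k /negbTE ->; rewrite expr1n.
apply: (big_ind2 (gal_eigen (alpha l))) => [|g c h d|k _].
- exact: gal_eigen1.
- exact: gal_eigenM.
- exact/gal_eigenX/theta_eigen.
Qed.

Lemma thetaPow_alphaPow (j i : idx) :
  thetaPow theta j (alphaPow alpha i) = (chi zeta j i)%:A * alphaPow alpha i.
Proof.
rewrite /alphaPow /chi rmorph_prod -in_algE rmorph_prod -big_split /=.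
apply: eq_bigr => k _; rewrite rmorphXn -[X in X ^+ _]/(thetaPow theta j (alpha k)).
rewrite (thetaPow_alpha j k : thetaPow theta j (alpha k) = _).
by rewrite exprMn /GRing.in_alg /= exprZn expr1n.
Qed.

Lemma alphaPow_neq0 (i : idx) : alphaPow alpha i != 0.
Proof. by apply/prodf_neq0 => k _; rewrite expf_neq0. Qed.

Variable e : 'I_(n ^ m) -> idx.

Lemma evb_thetaPow (j : idx) :
  evb (fun t => alphaPow alpha (e t)) (gdelta (thetaPow theta j))
  = map_mx (fun x : K => x%:A) (\row_t monoEval j (zetaPt zeta (e t)))
      *m diag_mx (\row_t alphaPow alpha (e t)).
Proof.
rewrite evb_gdelta; apply/rowP => t.
by rewrite mul_mx_diag !mxE thetaPow_alphaPow monoEval_zetaPt.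
Qed.

Hypothesis e_bij : bijective e.

(* The monomials alpha^i are linearly independent: a linear relation among
   them, transported by every theta^j, is annihilated by every character. *)
Lemma alphaPow_free : free [seq alphaPow alpha (e t) | t <- enum 'I_(n ^ m)].
Proof.
have [einv eK Ke] := e_bij.
have -> : [seq alphaPow alpha (e t) | t <- enum 'I_(n ^ m)]
          = [tuple alphaPow alpha (e t) | t < n ^ m] :> seq L by [].
apply/freeP => k rel s.
have {}rel : \sum_t k t *: alphaPow alpha (e t) = 0.
  by rewrite -[RHS]rel; apply: eq_bigr => t _; rewrite nth_mktuple.
have char_rel j : \sum_x chi zeta j x *: (k (einv x) *: alphaPow alpha x) = 0.
  rewrite -(sum_bij _ e_bij).
  rewrite (eq_bigr (fun t => thetaPow theta j (k t *: alphaPow alpha (e t)))) => [|t _].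
    by rewrite -linear_sum /= rel linear0.
  rewrite eK [RHS]linearZ /= -[X in _ = _ *: X]/(thetaPow theta j (alphaPow alpha (e t))).
  by rewrite thetaPow_alphaPow mulr_algl !scalerA mulrC.
have := chi_sum_eq0 zeta_prim char_rel (e s).
by rewrite eK => /eqP; rewrite scaler_eq0 (negbTE (alphaPow_neq0 _)) orbF => /eqP.
Qed.

Lemma alphaPow_basis : \dim {:L} = (n ^ m)%N ->
  basis_of {:L} [seq alphaPow alpha (e t) | t <- enum 'I_(n ^ m)].
Proof.
by move=> dimL; rewrite basisEfree alphaPow_free size_map size_enum_ord dimL leqnn subvf.
Qed.

Variable r : nat.

(* The rows of Y_{r,m} Diag(B) are the evaluations of the generators theta^j
   of RM_theta(r, n); the matrix is row-free since Diag(B) is invertible. *)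
Lemma RM_generator :
  is_generator_matrix
    (map_mx (fun x : K => x%:A) (Ymat zeta e r) *m diag_mx (\row_t alphaPow alpha (e t)))
    (code_eval (RM_code n theta r) (fun t => alphaPow alpha (e t))).
Proof.
set M := _ *m _.
have rowM i : row i M
    = evb (fun t => alphaPow alpha (e t)) (gdelta (thetaPow theta (enum_val i))).
  by rewrite row_mul -map_row Ymat_row evb_thetaPow.
split.
  rewrite /row_free mxrankMfree ?(mxrank_map (in_alg L)); first exact: Ymat_row_free.
  rewrite row_free_unit unitmxE det_diag unitfE; apply/prodf_neq0 => t _.
  by rewrite mxE alphaPow_neq0.
move=> v; apply: (iff_trans (RM_code_evalP _ _ _ _ v)).
exact: iff_sym (sub_enum_rowsP rowM v).
Qed.

End KummerBasis.

Theorem mainTheorem18 (K : fieldType) (n m : nat) (zeta : K)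
  (L : splittingFieldType K)
  (theta : 'I_m -> gal_of {:L}) (alpha : 'I_m -> L)
  (e : 'I_(n ^ m) -> {ffun 'I_m -> 'I_n}) (r : nat) :
  (2 <= n)%N ->
  n.-primitive_root zeta ->
  galois 1%VS {:L} ->
  \dim {:L} = (n ^ m)%N ->
  (forall i j, commute (theta i) (theta j)) ->
  injective (@thetaPow K L n m theta) ->
  (forall j : {ffun 'I_m -> 'I_n}, thetaPow theta j \in ('Gal({:L} / 1%VS))%g) ->
  (forall g, g \in ('Gal({:L} / 1%VS))%g -> exists j : {ffun 'I_m -> 'I_n}, thetaPow theta j = g) ->
  (forall k, alpha k != 0) ->
  (forall i j, i != j -> theta i (alpha j) = alpha j) ->
  (forall i, theta i (alpha i) = zeta%:A * alpha i) ->
  bijective e ->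
  (forall s t : 'I_(n ^ m), (s < t)%N -> revlex_lt (e s) (e t)) ->
  (r <= m * (n - 1))%N ->
  let B := fun t : 'I_(n ^ m) => alphaPow alpha (e t) in
  let X := fun t : 'I_(n ^ m) => zetaPt zeta (e t) in
  let Y := Ymat zeta e r in
  [/\ basis_of {:L} [seq B t | t <- enum 'I_(n ^ m)],
      (forall j : {ffun 'I_m -> 'I_n},
         evb B (gdelta (thetaPow theta j))
         = map_mx (fun x : K => x%:A) (\row_(t < n ^ m) monoEval j (X t))
             *m diag_mx (\row_(t < n ^ m) B t)),
      is_generator_matrix Y (HRM X r)
    & is_generator_matrix (map_mx (fun x : K => x%:A) Y *m diag_mx (\row_(t < n ^ m) B t))
        (code_eval (RM_code n theta r) B)].
Proof.
move=> _ zeta_prim _ dimL _ _ _ _ alpha_neq0 theta_fix theta_scale e_bij _ _ B X Y.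
split.
- exact: (alphaPow_basis zeta_prim alpha_neq0 theta_fix theta_scale e_bij dimL).
- exact: (evb_thetaPow theta_fix theta_scale).
- exact: (Ymat_generator r zeta_prim e_bij).
- exact: (RM_generator zeta_prim alpha_neq0 theta_fix theta_scale e_bij r).
Qed.
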